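(* Let $R$ be a commutative unital ring which is Noetherian and quasi-Euclidean, and let $M$ be a finitely generated $R$-module. Let $M \cong R/\mathfrak{a}_1 \times R/\mathfrak{a}_2 \times \cdots \times R/\mathfrak{a}_k$ be the invariant factor decomposition of $M$, where $\mathfrak{a}_1,\dots,\mathfrak{a}_k$ are ideals with $R \neq \mathfrak{a}_1 \supseteq \mathfrak{a}_2 \supseteq \cdots \supseteq \mathfrak{a}_k$, and identify $M$ with this product. For $1\le i\le k$ let $e_i \in M$ be the element with $i$-th coordinate $1 \in R/\mathfrak{a}_i$ and $j$-th coordinate $0$ for $j \neq i$. Then for every $n \ge k$, every row $\mathbf{m} \in \mathrm{Um}_n(M)$ is $\mathrm{E}_n(R)$-equivalent to a row of the form $(\delta e_1, e_2, \dots, e_k, 0, \dots, 0)$ (with $n-k$ trailing zeros) for some $\delta \in (R/\mathfrak{a}_1)^{\times}$. Moreover, if $n > k$, then $\delta$ can be taken to be $1$.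
   Context: All rings are commutative with identity; $R^{\times}$ denotes the unit group of $R$. A ring $R$ is quasi-Euclidean if for every $n \ge 2$ and every $\mathbf{r} = (r_1,\dots,r_n) \in R^n$ there exist $E \in \mathrm{E}_n(R)$ and $d \in R$ with $(d,0,\dots,0) = \mathbf{r}E$. Here $\mathrm{E}_n(R)$ is the subgroup of $\mathrm{GL}_n(R)$ generated by the elementary matrices (matrices differing from the identity in a single off-diagonal entry). For a finitely generated $R$-module $M$ and $n\ge 1$, $\mathrm{Um}_n(M)$ is the set of $\mathbf{m}=(m_1,\dots,m_n)\in M^n$ whose components generate $M$. $\mathrm{GL}_n(R)$ acts on $M^n$ (and on $\mathrm{Um}_n(M)$) by right multiplication: $(\mathbf{m}A)_j = \sum_i m_i A_{ij}$. Two rows $\mathbf{m},\mathbf{m}'\in\mathrm{Um}_n(M)$ are $\mathrm{E}_n(R)$-equivalent if $\mathbf{m}'=\mathbf{m}E$ for some $E\in\mathrm{E}_n(R)$. The element $\delta e_1$ means $e_1$ with first coordinate replaced by $\delta$ (equivalently, $\tilde\delta e_1$ for any lift $\tilde\delta\in R$ of $\delta$). An invariant factor decomposition of a finitely generated module over such a ring exists and is unique, and $k$ equals the minimal number of generators of $M$. *)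

From HB Require Import structures.
From mathcomp Require Import all_boot all_order all_algebra.
Set Implicit Arguments. Unset Strict Implicit. Unset Printing Implicit Defensive.
Import GRing.Theory.
Local Open Scope ring_scope.

Definition is_ideal (R : comRingType) (I : R -> Prop) : Prop :=
  [/\ I 0, (forall x y, I x -> I y -> I (x + y)) & (forall r x, I x -> I (r * x))].

Definition noetherian (R : comRingType) : Prop :=
  forall I : nat -> R -> Prop,
    (forall m, is_ideal (I m)) ->
    (forall m x, I m x -> I m.+1 x) ->
    exists N, forall m, (N <= m)%N -> forall x, I m x -> I N x.

Definition elementary_mx (R : comRingType) (n : nat) (A : 'M[R]_n) : Prop :=
  exists i j : 'I_n, i != j /\ exists a : R, A = 1%:M + a *: delta_mx i j.

Inductive En (R : comRingType) (n : nat) : 'M[R]_n -> Prop :=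
| En_one : En 1%:M
| En_elem A : elementary_mx A -> En A
| En_mul A B : En A -> En B -> En (A *m B)
| En_inv A B : En A -> A *m B = 1%:M -> B *m A = 1%:M -> En B.

Definition quasi_euclidean (R : comRingType) : Prop :=
  forall n, (2 <= n)%N -> forall r : 'rV[R]_n,
    exists (E : 'M[R]_n) (d : R),
      En E /\ r *m E = \row_j (if (val j == 0)%N then d else 0).

(* The module M = R/a_0 x ... x R/a_{k-1} (ideals indexed 0..k-1; the paper's
   a_1..a_k).  An element of M is represented by a row of representatives
   in R^k; a row (m_1..m_n) in M^n by a matrix X : 'M_(n,k) whose j-th row
   gives the coordinates of m_j. *)

Definition mod_eq (R : comRingType) (n k : nat) (a : nat -> R -> Prop)
  (X Y : 'M[R]_(n, k)) : Prop :=
  forall (j : 'I_n) (l : 'I_k), a (val l) (X j l - Y j l).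

Definition unimodular (R : comRingType) (n k : nat) (a : nat -> R -> Prop)
  (X : 'M[R]_(n, k)) : Prop :=
  forall x : 'rV[R]_k, exists c : 'rV[R]_n,
    forall l : 'I_k, a (val l) ((c *m X) ord0 l - x ord0 l).

(* Right action of A in GL_n(R): (m A)_j = sum_i m_i A_ij, i.e. on the
   coordinate matrix X it is A^T *m X. *)
Definition act (R : comRingType) (n k : nat) (A : 'M[R]_n) (X : 'M[R]_(n, k))
  : 'M[R]_(n, k) := A^T *m X.

Definition normal_form (R : comRingType) (n k : nat) (delta : R) : 'M[R]_(n, k) :=
  \matrix_(j < n, l < k)
    (if (val j == val l)%N then (if (val l == 0)%N then delta else 1) else 0).

Definition unit_mod (R : comRingType) (I : R -> Prop) (delta : R) : Prop :=
  exists u : R, I (delta * u - 1).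

(** Quasi-Euclideanity turns
    the last column of the coordinate matrix into (d, 0, ..., 0), and since the
    row generates M its coordinate in R/a_k shows that d is a unit modulo a_k;
    elementary operations then put a 1 in the row of index k and clear the rest
    of that column.  Subtracting a combination of the other rows, provided again
    by generation, clears the rest of that row up to a_k, which lies in every
    other a_i.  Deleting this row and the last column leaves a generating row of
    R/a_1 x ... x R/a_(k-1), and elementary matrices of the smaller size embed
    into E_n(R).  A nontrivial delta can only come from the case n = k = 1, and
    that it is a unit is read off from the normal form still generating M. *)

From HB Require Import structures.
From mathcomp Require Import all_boot all_order all_algebra.
From mathcomp Require Import ring zify.
Set Implicit Arguments. Unset Strict Implicit. Unset Printing Implicit Defensive.
Import GRing.Theory.
Local Open Scope ring_scope.

Section Ideal.
Variables (R : comRingType) (I : R -> Prop).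
Hypothesis idealI : is_ideal I.

Lemma idealr0 : I 0. Proof. by case: idealI. Qed.

Lemma idealrD x y : I x -> I y -> I (x + y).
Proof. by case: idealI => _ + _; apply. Qed.

Lemma idealrMl r x : I x -> I (r * x).
Proof. by case: idealI => _ _; apply. Qed.

Lemma idealrMr r x : I x -> I (x * r).
Proof. by rewrite mulrC; apply: idealrMl. Qed.

Lemma idealrN x : I x -> I (- x).
Proof. by rewrite -mulN1r; apply: idealrMl. Qed.

Lemma idealrB x y : I x -> I y -> I (x - y).
Proof. by move=> Ix Iy; apply: idealrD => //; apply: idealrN. Qed.

Lemma idealr_sum (T : Type) (s : seq T) (F : T -> R) :
  (forall t, I (F t)) -> I (\sum_(t <- s) F t).
Proof. by move=> IF; apply: (big_ind I) => //; [apply: idealr0 | apply: idealrD]. Qed.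
End Ideal.

Section Action.
Variable R : comRingType.

Lemma actE n k (E : 'M[R]_n) (X : 'M[R]_(n, k)) r l :
  act E X r l = \sum_t E t r * X t l.
Proof. by rewrite /act mxE; apply: eq_bigr => t _; rewrite mxE. Qed.

Lemma actM n k (E F : 'M[R]_n) (X : 'M[R]_(n, k)) : act (E *m F) X = act F (act E X).
Proof. by rewrite /act trmx_mul mulmxA. Qed.

Lemma act1 n k (X : 'M[R]_(n, k)) : act 1%:M X = X.
Proof. by rewrite /act trmx1 mul1mx. Qed.

Lemma mul_nilpotent_shear n (D : 'M[R]_n) x y : D *m D = 0 ->
  (1%:M + x *: D) *m (1%:M + y *: D) = 1%:M + (x + y) *: D.
Proof.
move=> DD; rewrite mulmxDl !mulmxDr !mul1mx mulmx1 -!scalemxAl -scalemxAr DD.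
by rewrite !scaler0 addr0 scalerDl (addrC (x *: D)) addrA.
Qed.

Lemma En_invertible n (E : 'M[R]_n) :
  En E -> exists F, E *m F = 1%:M /\ F *m E = 1%:M.
Proof.
elim=> {E}.
- by exists 1%:M; rewrite mul1mx.
- move=> _ [i [j [ij [c ->]]]]; exists (1%:M + (- c) *: delta_mx i j).
  have DD : delta_mx i j *m delta_mx i j = 0 :> 'M[R]_n.
    by rewrite mul_delta_mx_cond eq_sym (negbTE ij) mulr0n.
  by rewrite !mul_nilpotent_shear // ?addrN ?addNr scale0r addr0.
- move=> A B _ [FA [AFA FAA]] _ [FB [BFB FBB]]; exists (FB *m FA); split.
  + by rewrite mulmxA -(mulmxA A) BFB mulmx1 AFA.
  + by rewrite mulmxA -(mulmxA FB) FAA mulmx1 FBB.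
- by move=> A B _ _ AB BA; exists A.
Qed.

Lemma unimodular_act (a : nat -> R -> Prop) n k (E : 'M[R]_n) (X : 'M[R]_(n, k)) :
  En E -> unimodular a X -> unimodular a (act E X).
Proof.
move=> /En_invertible [F [EF _]] uX x; have [c hc] := uX x.
exists (c *m F^T) => l.
by rewrite /act mulmxA -(mulmxA c) -trmx_mul EF trmx1 mulmx1.
Qed.
End Action.

Section Equivalence.
Variables (R : comRingType) (a : nat -> R -> Prop) (k : nat).
Hypothesis ideal_a : forall i, (i < k)%N -> is_ideal (a i).

Let ideal_l (l : 'I_k) : is_ideal (a l) := ideal_a (ltn_ord l).

Lemma mod_eq_refl n (X : 'M[R]_(n, k)) : mod_eq a X X.
Proof. by move=> j l; rewrite subrr; apply: idealr0 (ideal_l l). Qed.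

Lemma mod_eq_trans n (X Y Z : 'M[R]_(n, k)) :
  mod_eq a X Y -> mod_eq a Y Z -> mod_eq a X Z.
Proof.
move=> XY YZ j l; have := idealrD (ideal_l l) (XY j l) (YZ j l).
by rewrite addrA subrK.
Qed.

Lemma mod_eq_act n (E : 'M[R]_n) (X Y : 'M[R]_(n, k)) :
  mod_eq a X Y -> mod_eq a (act E X) (act E Y).
Proof.
move=> XY j l; rewrite !actE -sumrB; apply: (idealr_sum (ideal_l l)) => t.
by rewrite -mulrBr; apply: idealrMl (ideal_l l) _ _ (XY t l).
Qed.

Lemma unimodular_mod_eq n (X Y : 'M[R]_(n, k)) :
  mod_eq a X Y -> unimodular a X -> unimodular a Y.
Proof.
move=> XY uX x; have [c hc] := uX x; exists c => l.
have -> : (c *m Y) ord0 l - x ord0 l =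
   ((c *m X) ord0 l - x ord0 l) - \sum_t c ord0 t * (X t l - Y t l).
  rewrite !mxE [in RHS]addrAC -sumrB.
  by congr (_ - _); apply: eq_bigr => t _; ring.
apply: (idealrB (ideal_l l) (hc l)); apply: (idealr_sum (ideal_l l)) => t.
exact: (idealrMl (ideal_l l) _ (XY t l)).
Qed.

Definition En_equiv n (X Y : 'M[R]_(n, k)) := exists E, En E /\ mod_eq a (act E X) Y.

Lemma En_equiv_trans n (X Y Z : 'M[R]_(n, k)) :
  En_equiv X Y -> En_equiv Y Z -> En_equiv X Z.
Proof.
move=> [E [EE XY]] [F [EF YZ]]; exists (E *m F); split; first exact: En_mul.
by rewrite actM; apply: mod_eq_trans YZ; apply: mod_eq_act.
Qed.

Lemma En_equiv_act n (E : 'M[R]_n) (X : 'M[R]_(n, k)) : En E -> En_equiv X (act E X).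
Proof. by move=> EE; exists E; split => //; apply: mod_eq_refl. Qed.

Lemma En_equiv_mod_eq n (X Y : 'M[R]_(n, k)) : mod_eq a X Y -> En_equiv X Y.
Proof. by move=> XY; exists 1%:M; rewrite act1; split => //; constructor. Qed.

Lemma unimodular_En_equiv n (X Y : 'M[R]_(n, k)) :
  En_equiv X Y -> unimodular a X -> unimodular a Y.
Proof.
by move=> [E [EE XY]] uX; apply: unimodular_mod_eq XY _; apply: unimodular_act.
Qed.
End Equivalence.

Section RowOperations.
Variable R : comRingType.

Lemma En_tr n (A : 'M[R]_n) : En A -> En A^T.
Proof.
elim=> {A}.
- by rewrite trmx1; constructor.
- move=> _ [i [j [ij [c ->]]]]; apply: En_elem; exists j, i; split; first by rewrite eq_sym.
  by exists c; rewrite linearD /= linearZ /= trmx1 trmx_delta.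
- by move=> A B _ EA _ EB; rewrite trmx_mul; apply: En_mul.
- move=> A B _ EA AB BA; apply: (En_inv EA).
  + by rewrite -trmx_mul BA trmx1.
  + by rewrite -trmx_mul AB trmx1.
Qed.

Lemma En_shears_column n (p : 'I_n) (c : 'I_n -> R) (s : seq 'I_n) : c p = 0 ->
  En (1%:M + \sum_(j <- s) c j *: delta_mx j p).
Proof.
move=> cp0; elim: s => [|j s IH]; first by rewrite big_nil addr0; constructor.
have -> : 1%:M + \sum_(i <- j :: s) c i *: delta_mx i p =
   (1%:M + \sum_(i <- s) c i *: delta_mx i p) *m (1%:M + c j *: delta_mx j p).
  rewrite big_cons mulmxDr mulmx1 mulmxDl mul1mx mulmx_suml.
  have -> : \sum_(i <- s) c i *: delta_mx i p *m (c j *: delta_mx j p) = 0.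
    apply: big1 => i _; rewrite -scalemxAl -scalemxAr mul_delta_mx_cond.
    have [<-|pj] := eqVneq p j; first by rewrite cp0 !scale0r scaler0.
    by rewrite mulr0n !scaler0.
  by rewrite addr0 addrAC addrA.
apply: En_mul IH _; have [->|jp] := eqVneq j p.
  by rewrite cp0 scale0r addr0; constructor.
by apply: En_elem; exists j, p; split => //; exists (c j).
Qed.

Lemma mul_delta_mxE n k (i j : 'I_n) (X : 'M[R]_(n, k)) r l :
  (delta_mx i j *m X) r l = (r == i)%:R * X j l.
Proof.
rewrite mxE (bigD1 j) //= big1 => [|t tj]; last by rewrite !mxE (negbTE tj) andbF mul0r.
by rewrite !mxE eqxx andbT addr0.
Qed.

Lemma En_add_comb_row n k (p : 'I_n) (c : 'I_n -> R) (X : 'M[R]_(n, k)) : c p = 0 ->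
  exists2 E, En E & forall r l, act E X r l = X r l + (r == p)%:R * \sum_t c t * X t l.
Proof.
move=> cp0; exists (1%:M + \sum_j c j *: delta_mx j p); first exact: En_shears_column.
move=> r l; rewrite /act linearD /= trmx1 linear_sum /= mulmxDl mul1mx.
rewrite mulmx_suml !mxE summxE mulr_sumr; congr (_ + _); apply: eq_bigr => j _.
by rewrite linearZ /= trmx_delta -scalemxAl mxE mul_delta_mxE mulrCA.
Qed.

Lemma En_add_row_multiples n k (s : 'I_n) (w : 'I_n -> R) (X : 'M[R]_(n, k)) : w s = 0 ->
  exists2 E, En E & forall r l, act E X r l = X r l + w r * X s l.
Proof.
move=> ws0; exists (1%:M + \sum_j w j *: delta_mx s j).
  have -> : 1%:M + \sum_j w j *: delta_mx s j = (1%:M + \sum_j w j *: delta_mx j s)^T.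
    by rewrite linearD /= trmx1 linear_sum; congr (_ + _); apply: eq_bigr => j _;
      rewrite linearZ /= trmx_delta.
  exact/En_tr/En_shears_column.
move=> r l; rewrite /act linearD /= trmx1 linear_sum /= mulmxDl mul1mx.
rewrite mulmx_suml !mxE summxE (bigD1 r) //= big1 => [|j jr].
  by rewrite linearZ /= trmx_delta -scalemxAl mxE mul_delta_mxE eqxx mul1r addr0.
by rewrite linearZ /= trmx_delta -scalemxAl mxE mul_delta_mxE eq_sym (negbTE jr) mul0r mulr0.
Qed.

Lemma En_add_row n k (p q : 'I_n) (c : R) (X : 'M[R]_(n, k)) : p != q ->
  exists2 E, En E & forall r l, act E X r l = X r l + (r == p)%:R * (c * X q l).
Proof.
move=> pq; have [E EE actEX] := En_add_comb_row X (c := fun t => if t == q then c else 0)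
  (ifN_eq _ _ pq).
exists E => // r l; rewrite actEX (bigD1 q) //= eqxx big1 ?addr0 // => t /negbTE ->.
by rewrite mul0r.
Qed.
End RowOperations.

Section LiftMatrix.
Variables (R : comRingType) (n : nat) (p : 'I_n.+1).

Definition lift_mx (F : 'M[R]_n) : 'M[R]_n.+1 :=
  \matrix_(r, s) match unlift p r, unlift p s with
                 | Some i, Some j => F i j
                 | _, _ => (r == s)%:R
                 end.

Lemma lift_mx_lift F i j : lift_mx F (lift p i) (lift p j) = F i j.
Proof. by rewrite mxE !liftK. Qed.

Lemma lift_mx_pivot_row F s : lift_mx F p s = (p == s)%:R.
Proof. by rewrite mxE unlift_none. Qed.

Lemma lift_mx_pivot_col F r : lift_mx F r p = (r == p)%:R.
Proof. by rewrite mxE unlift_none; case: (unlift p r). Qed.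

Lemma sum_pivot_lift (F : 'I_n.+1 -> R) : \sum_t F t = F p + \sum_i F (lift p i).
Proof. by rewrite (bigD1_ord p). Qed.

Let pivot_neq_lift i : (p == lift p i) = false. Proof. exact/negbTE/neq_lift. Qed.
Let lift_neq_pivot i : (lift p i == p) = false. Proof. by rewrite eq_sym pivot_neq_lift. Qed.

Lemma lift_mx1 : lift_mx 1%:M = 1%:M.
Proof.
apply/matrixP => r s; rewrite [RHS]mxE.
case: (unliftP p r) => [i ->|->]; case: (unliftP p s) => [j ->|->];
  rewrite ?lift_mx_lift ?lift_mx_pivot_row ?lift_mx_pivot_col ?lift_neq_pivot ?pivot_neq_lift //.
by rewrite mxE (inj_eq (@lift_inj _ p)).
Qed.

Lemma lift_mxM A B : lift_mx (A *m B) = lift_mx A *m lift_mx B.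
Proof.
apply/matrixP => r s; rewrite [RHS]mxE sum_pivot_lift.
case: (unliftP p r) => [i ->|->]; case: (unliftP p s) => [j ->|->];
  rewrite ?lift_mx_lift ?lift_mx_pivot_row ?lift_mx_pivot_col ?lift_neq_pivot ?pivot_neq_lift
          ?eqxx /= ?mul0r ?mulr0 ?mul1r ?add0r.
- by rewrite mxE; apply: eq_bigr => t _; rewrite !lift_mx_lift.
- by rewrite big1 // => t _; rewrite lift_mx_pivot_col lift_neq_pivot mulr0.
- by rewrite big1 // => t _; rewrite lift_mx_pivot_row pivot_neq_lift mul0r.
- by rewrite big1 ?addr0 // => t _; rewrite lift_mx_pivot_row pivot_neq_lift mul0r.
Qed.

Lemma elementary_lift_mx F : elementary_mx F -> elementary_mx (lift_mx F).
Proof.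
move=> [i [j [ij [c ->]]]]; exists (lift p i), (lift p j).
split; first by rewrite (inj_eq (@lift_inj _ p)).
exists c; apply/matrixP => r s; rewrite !mxE.
case: (unliftP p r) => [r' ->|->]; case: (unliftP p s) => [s' ->|->];
  rewrite ?liftK ?unlift_none ?mxE ?(inj_eq (@lift_inj _ p)) ?lift_neq_pivot ?pivot_neq_lift
          ?andbF ?mulr0 ?addr0 //.
Qed.

Lemma En_lift_mx F : En F -> En (lift_mx F).
Proof.
elim=> {F}.
- by rewrite lift_mx1; constructor.
- by move=> A /elementary_lift_mx; apply: En_elem.
- by move=> A B _ EA _ EB; rewrite lift_mxM; apply: En_mul.
- by move=> A B _ EA AB BA; apply: (En_inv EA); rewrite -lift_mxM ?AB ?BA lift_mx1.
Qed.

Lemma act_lift_mx_pivot k F (X : 'M[R]_(n.+1, k)) l : act (lift_mx F) X p l = X p l.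
Proof.
rewrite actE sum_pivot_lift lift_mx_pivot_col eqxx mul1r big1 ?addr0 // => t _.
by rewrite lift_mx_pivot_col lift_neq_pivot mul0r.
Qed.

Lemma act_lift_mx_lift k F (X : 'M[R]_(n.+1, k)) i l :
  act (lift_mx F) X (lift p i) l = \sum_t F t i * X (lift p t) l.
Proof.
rewrite actE sum_pivot_lift lift_mx_pivot_row pivot_neq_lift mul0r add0r.
by apply: eq_bigr => t _; rewrite lift_mx_lift.
Qed.
End LiftMatrix.

Section Pivoting.
Variables (R : comRingType) (a : nat -> R -> Prop) (k : nat).
Hypothesis ideal_a : forall i, (i < k)%N -> is_ideal (a i).

Let ideal_l (l : 'I_k) : is_ideal (a l) := ideal_a (ltn_ord l).

Lemma unimodular_column n (X : 'M[R]_(n, k)) (l : 'I_k) :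
  unimodular a X -> exists c : 'I_n -> R, a l (\sum_t c t * X t l - 1).
Proof.
move=> /(_ (delta_mx 0 l)) [c hc]; exists (c ord0).
by have := hc l; rewrite !mxE !eqxx.
Qed.

Lemma quasi_euclidean_column n (X : 'M[R]_(n, k)) (l : 'I_k) :
  quasi_euclidean R -> (2 <= n)%N ->
  exists E d, En E /\ forall j : 'I_n, act E X j l = if val j == 0%N then d else 0.
Proof.
move=> QE n2; have [E [d [EE XE]]] := QE n n2 (\row_t X t l).
exists E, d; split => // j; have := congr1 (fun M : 'M[R]_(1, n) => M ord0 j) XE.
rewrite !mxE => <-; apply: eq_bigr => t _; by rewrite !mxE mulrC.
Qed.

Lemma En_equiv_move_one n (Z : 'M[R]_(n, k)) (l : 'I_k) (p q : 'I_n) :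
  p != q -> a l (Z q l - 1) -> exists W, En_equiv a Z W /\ a l (W p l - 1).
Proof.
move=> pq Zq1; have [E EE actEZ] := En_add_row (1 - Z p l) Z pq.
exists (act E Z); split; first exact: En_equiv_act.
have := idealrMl (ideal_l l) (1 - Z p l) Zq1.
by rewrite actEZ eqxx mul1r; congr (a l _); ring.
Qed.

Lemma En_equiv_pivot_one n (Y : 'M[R]_(n, k)) (l : 'I_k) (p : 'I_n) :
  quasi_euclidean R -> (2 <= n)%N -> unimodular a Y ->
  exists Z, En_equiv a Y Z /\ a l (Z p l - 1).
Proof.
move=> QE n2 uY; have [E [d [EE YEl]]] := quasi_euclidean_column Y l QE n2.
have [c cd] := unimodular_column l (unimodular_act EE uY).
pose q0 : 'I_n := Ordinal (ltnW n2).
have {}cd : a l (c q0 * d - 1).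
  move: cd; rewrite (bigD1 q0) //= YEl /= big1 ?addr0 // => t t0.
  by rewrite YEl -[val t == _]/(t == q0) (negbTE t0) mulr0.
pose q : 'I_n := if p == q0 then Ordinal n2 else p.
have qq0 : q != q0 by rewrite /q; have [_|] := eqVneq p q0; rewrite ?ifT ?ifF -?val_eqE.
have [F EF actFY] := En_add_row (c q0) (act E Y) qq0.
have Zq1 : a l (act F (act E Y) q l - 1).
  by rewrite actFY eqxx mul1r !YEl /= -[val q == _]/(q == q0) (negbTE qq0) add0r.
have YZ : En_equiv a Y (act F (act E Y)).
  exact: (En_equiv_trans ideal_a (En_equiv_act ideal_a Y EE) (En_equiv_act ideal_a _ EF)).
have [pq|pq] := eqVneq p q; first by exists (act F (act E Y)); rewrite pq.
have [W [ZW Wp1]] := En_equiv_move_one pq Zq1.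
by exists W; split => //; exact: (En_equiv_trans ideal_a YZ ZW).
Qed.

Lemma En_equiv_clear_column n (Z : 'M[R]_(n, k)) (l : 'I_k) (s : 'I_n) :
  a l (Z s l - 1) -> exists W, En_equiv a Z W /\ forall j, a l (W j l - (j == s)%:R).
Proof.
move=> Zs1; have [E EE actEZ] := En_add_row_multiples Z
  (w := fun t => if t == s then 0 else - Z t l) (s := s) (ifT _ _ (eqxx s)).
exists (act E Z); split => [|j]; first exact: En_equiv_act.
rewrite actEZ; have [->|js] := eqVneq j s; first by rewrite mul0r addr0.
have := idealrMl (ideal_l l) (- Z j l) Zs1.
by rewrite subr0; congr (a l _); ring.
Qed.
End Pivoting.

Section LastColumn.
Variables (R : comRingType) (a : nat -> R -> Prop) (k : nat).
Hypothesis ideal_a : forall i, (i < k.+1)%N -> is_ideal (a i).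
Hypothesis last_ideal_sub : forall i x, (i <= k)%N -> a k x -> a i x.

Let ideal_k : is_ideal (a k) := ideal_a (ltnSn k).
Let ideal_l (l : 'I_k.+1) : is_ideal (a l) := ideal_a (ltn_ord l).

Lemma pivot_coef_in_ideal n (Z : 'M[R]_(n, k.+1)) (p : 'I_n) (c : 'I_n -> R) :
  (forall j, a k (Z j ord_max - (j == p)%:R)) ->
  a k (\sum_t c t * Z t ord_max) -> a k (c p).
Proof.
move=> Zcol Zc; have Zc' : a k (\sum_t c t * (Z t ord_max - (t == p)%:R)).
  by apply: (idealr_sum ideal_k) => t; apply: idealrMl ideal_k _ _ (Zcol t).
have := idealrB ideal_k Zc Zc'.
rewrite -sumrB (eq_bigr (fun t => c t * (t == p)%:R)) => [|t _]; last by ring.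
rewrite (bigD1 p) //= eqxx mulr1 big1 ?addr0 // => t /negbTE ->.
by rewrite mulr0.
Qed.

Lemma En_equiv_clear_pivot_row n (Z : 'M[R]_(n, k.+1)) (p : 'I_n) :
  unimodular a Z -> (forall j, a k (Z j ord_max - (j == p)%:R)) ->
  exists W, [/\ En_equiv a Z W, forall j, a k (W j ord_max - (j == p)%:R)
              & forall l : 'I_k, a l (W p (lift ord_max l))].
Proof.
move=> uZ Zcol.
have [c Zpc] := uZ (\row_m (if m == ord_max then 0 else Z p m)).
have cp : a k (c ord0 p).
  apply: pivot_coef_in_ideal Zcol _; have := Zpc ord_max.
  by rewrite !mxE eqxx subr0.
have [E EE actEZ] := En_add_comb_row Z
  (c := fun t => if t == p then 0 else - c ord0 t) (p := p) (ifT _ _ (eqxx p)).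
have comb_pivot l : \sum_t (if t == p then 0 else - c ord0 t) * Z t l
                   = c ord0 p * Z p l - \sum_t c ord0 t * Z t l.
  rewrite [in RHS](bigD1 p) //= (bigD1 p) //= eqxx mul0r add0r opprD addNKr.
  by rewrite -sumrN; apply: eq_bigr => t /negbTE ->; rewrite mulNr.
exists (act E Z); split => [|j|l]; first exact: En_equiv_act.
- rewrite actEZ comb_pivot; have [->|jp] := eqVneq j p; last first.
    by move: (Zcol j); rewrite (negbTE jp) /= mulr0n mul0r addr0.
  have := idealrD ideal_k (idealrMr ideal_k (Z p ord_max) cp)
    (idealrB ideal_k (Zcol p) (Zpc ord_max)).
  by rewrite !mxE !eqxx /= subr0 mulr1n; congr (a k _); ring.
- have Il := ideal_l (lift ord_max l).
  have := idealrD Il (idealrMr Il (Z p (lift ord_max l))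
    (last_ideal_sub (ltn_ord (lift ord_max l)) cp)) (idealrN Il (Zpc (lift ord_max l))).
  rewrite actEZ comb_pivot eqxx mul1r !mxE eq_sym (negbTE (neq_lift _ _)) lift_max.
  by congr (a l _); ring.
Qed.
End LastColumn.

Lemma bump_small h l : (l < h)%N -> bump h l = l.
Proof. by move=> lh; rewrite /bump leqNgt lh. Qed.

Lemma bump_eq_small h i l : (l < h)%N -> (bump h i == l) = (i == l).
Proof. by rewrite /bump; case: leqP => //= hi lh; apply/eqP/eqP; lia. Qed.

Section DeletePivot.
Variables (R : comRingType) (a : nat -> R -> Prop) (k n : nat).
Hypothesis ideal_a : forall i, (i < k.+1)%N -> is_ideal (a i).
Hypothesis last_ideal_sub : forall i x, (i <= k)%N -> a k x -> a i x.
Variables (p : 'I_n.+1) (W : 'M[R]_(n.+1, k.+1)).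
Hypothesis Wcol : forall j, a k (W j ord_max - (j == p)%:R).

Lemma unimodular_minor : unimodular a W -> unimodular a (row' p (col' ord_max W)).
Proof.
move=> uW x.
have [c Wc] := uW (\row_m (if unlift ord_max m is Some m' then x ord0 m' else 0)).
have cp : a k (c ord0 p).
  apply: (pivot_coef_in_ideal ideal_a Wcol); have := Wc ord_max.
  by rewrite !mxE unlift_none subr0.
exists (\row_i c ord0 (lift p i)) => l.
have Il := ideal_a (ltn_ord (lift ord_max l)).
have := idealrB Il (Wc (lift ord_max l)) (idealrMr Il (W p (lift ord_max l))
  (last_ideal_sub (ltn_ord (lift ord_max l)) cp)).
rewrite !mxE liftK lift_max (sum_pivot_lift p); congr (a l _).
suff -> : \sum_j (\row_i c ord0 (lift p i)) ord0 j * row' p (col' ord_max W) j l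
        = \sum_i c ord0 (lift p i) * W (lift p i) (lift ord_max l) by ring.
by apply: eq_bigr => i _; rewrite !mxE.
Qed.

Hypothesis Wrow : forall l : 'I_k, a l (W p (lift ord_max l)).

Lemma En_equiv_lift_normal_form (F : 'M[R]_n) (delta : R) :
  val p = k -> (k = 0%N -> delta = 1) -> En F ->
  mod_eq a (act F (row' p (col' ord_max W))) (normal_form n k delta) ->
  En_equiv a W (normal_form n.+1 k.+1 delta).
Proof.
move=> pk delta1 EF Fnf; exists (lift_mx p F); split; first exact: En_lift_mx.
have ideal_k := ideal_a (ltnSn k).
move=> r l; case: (unliftP p r) => [i ->|->]; case: (unliftP ord_max l) => [l' ->|->].
- have := Fnf i l'; rewrite act_lift_mx_lift actE !mxE /= bump_small // pk bump_eq_small //.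
  by congr (a l' (_ - _)); apply: eq_bigr => t _; rewrite !mxE.
- rewrite act_lift_mx_lift !mxE /= (_ : (bump p i == k) = false) ?subr0; last first.
    by rewrite -pk eq_sym; apply/negbTE/neq_bump.
  apply: (idealr_sum ideal_k) => t; apply: idealrMl ideal_k _ _ _.
  by have := Wcol (lift p t); rewrite eq_sym (negbTE (neq_lift _ _)) subr0.
- by rewrite act_lift_mx_pivot !mxE /= bump_small // pk (gtn_eqF (ltn_ord l')) subr0.
- rewrite act_lift_mx_pivot !mxE /= pk eqxx.
  by have := Wcol p; rewrite eqxx; case: eqP => [/delta1 ->|].
Qed.
End DeletePivot.

Section NormalForm.
Variables (R : comRingType) (a : nat -> R -> Prop).

Lemma ideal_chain_le k : (forall i, (i.+1 < k)%N -> forall x, a i.+1 x -> a i x) ->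
  forall i j x, (i <= j)%N -> (j < k)%N -> a j x -> a i x.
Proof.
move=> chain i j x; elim: j => [|j IH]; first by rewrite leqn0 => /eqP ->.
rewrite leq_eqVlt => /orP [/eqP -> //|ij] jk /chain ax.
exact: IH (ltnW jk) (ax jk).
Qed.

Lemma En_equiv_normal_form k : quasi_euclidean R ->
  (forall i, (i < k)%N -> is_ideal (a i)) ->
  (forall i, (i.+1 < k)%N -> forall x, a i.+1 x -> a i x) ->
  forall n (X : 'M[R]_(n, k)), (k <= n)%N -> unimodular a X ->
  exists delta, En_equiv a X (normal_form n k delta) /\ ((k < n)%N -> delta = 1).
Proof.
move=> QE; elim: k => [|k IH] ideal_a chain n X kn uX.
  by exists 1; split => //; apply: En_equiv_mod_eq => j [].
case: n X kn uX => [|[|n]] X // kn uX.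
  have k0 : k = 0%N by move: kn; rewrite ltnS leqn0 => /eqP.
  subst k; exists (X ord0 ord0); split => //; apply: En_equiv_mod_eq => j l.
  by rewrite (ord1 j) (ord1 l) !mxE subrr; apply: idealr0 (ideal_a 0%N isT).
pose p : 'I_n.+2 := inord k.
have pk : val p = k by rewrite /= inordK.
have last_sub i x : (i <= k)%N -> a k x -> a i x.
  by move=> ik; apply: ideal_chain_le chain i k x ik (ltnSn k).
have [Z [XZ Zp1]] := En_equiv_pivot_one ideal_a ord_max p QE (isT : (2 <= n.+2)%N) uX.
have [V [ZV Vcol]] := En_equiv_clear_column ideal_a Zp1.
have uV := unimodular_En_equiv ideal_a (En_equiv_trans ideal_a XZ ZV) uX.
have [W [VW Wcol Wrow]] := En_equiv_clear_pivot_row ideal_a last_sub uV Vcol.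
have uW := unimodular_En_equiv ideal_a VW uV.
have [||delta [[F [EF Fnf]] delta1]] :=
  IH _ _ n.+1 _ kn (unimodular_minor ideal_a last_sub Wcol uW).
- by move=> i ik; apply: ideal_a; apply: ltnW.
- by move=> i ik; apply: chain; apply: ltnW.
exists delta; split => //.
apply: (En_equiv_trans ideal_a (En_equiv_trans ideal_a XZ (En_equiv_trans ideal_a ZV VW))).
by apply: (En_equiv_lift_normal_form ideal_a Wcol Wrow pk _ EF Fnf) => k0; apply: delta1; rewrite k0.
Qed.

Lemma unit_mod_normal_form n k (delta : R) : (0 < k)%N -> (k <= n)%N ->
  unimodular a (normal_form n k delta) -> unit_mod (a 0%N) delta.
Proof.
move=> k0 kn /(unimodular_column (Ordinal k0)) [c].
pose t0 : 'I_n := Ordinal (leq_trans k0 kn).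
rewrite (bigD1 t0) //= big1 => [|t t0t]; last first.
  by rewrite !mxE -[val t == 0%N]/(t == t0) (negbTE t0t) mulr0.
by rewrite !mxE /= addr0 => cd; exists (c t0); rewrite mulrC.
Qed.
End NormalForm.

Theorem theoremA (R : comRingType) (n k : nat) (a : nat -> R -> Prop) :
  noetherian R -> quasi_euclidean R ->
  (0 < k)%N ->
  (forall i, (i < k)%N -> is_ideal (a i)) ->
  (exists r : R, ~ a 0%N r) ->
  (forall i, (i.+1 < k)%N -> forall x, a i.+1 x -> a i x) ->
  (k <= n)%N ->
  forall X : 'M[R]_(n, k), unimodular a X ->
    (exists (E : 'M[R]_n) (delta : R),
        En E /\ unit_mod (a 0%N) delta /\ mod_eq a (act E X) (normal_form n k delta))
    /\ ((k < n)%N ->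
        exists E : 'M[R]_n, En E /\ mod_eq a (act E X) (normal_form n k 1)).
Proof.
(* Noetherianity and [a 0 <> R] only serve the existence of the invariant
   factor decomposition, which the statement takes as given. *)
move=> _ QE k0 ideal_a _ chain kn X uX.
have [delta [XN delta1]] := En_equiv_normal_form QE ideal_a chain kn uX.
have [E [EE XE]] := XN.
split=> [|kn']; last by exists E; rewrite -(delta1 kn').
exists E, delta; split; [done | split=> //].
exact: unit_mod_normal_form k0 kn (unimodular_En_equiv ideal_a XN uX).
Qed.
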